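(* Let $(\mathcal G,\mathcal Z,\pi)$ be an uncertainty triplet, $X\in\mathcal Z$, and $\rho$ a compatible objective functional. Suppose that $\mathcal G_X(\rho)$ contains a bijection $g$, and that $\rho$ is $\pi_g$-continuous on $g(\mathcal Z)=\{g(Z):Z\in\mathcal Z\}$, where $\pi_g(g(Y),g(Z)):=\pi(Y,Z)$ for $Y,Z\in\mathcal Z$. Then $\rho$ is robust at $X$ relative to $(\mathcal G,\mathcal Z,\pi)$.
   Context: $\mathcal G_n$ denotes the set of measurable functions $\mathbb R^n\to\mathbb R$. An uncertainty triplet $(\mathcal G,\mathcal Z,\pi)$ consists of $\mathcal G\subset\mathcal G_n$ and a pseudo-metric space $(\mathcal Z,\pi)$ of $n$-dimensional random vectors on an atomless probability space. An objective functional $\rho$ is compatible with it if $\rho$ maps $\{g(Z):Z\in\mathcal Z,g\in\mathcal G\}$ to $\mathbb R\cup\{+\infty\}$ and $\rho(g(Y))=\rho(g(Z))$ whenever $g\in\mathcal G$, $Y,Z\in\mathcal Z$, $\pi(Y,Z)=0$. For $X\in\mathcal Z$, $\mathcal G_X(\rho)=\{g\in\mathcal G:\rho(g(X))=\inf_{h\in\mathcal G}\rho(h(X))\}$. $\rho$ is robust at $X$ relative to $(\mathcal G,\mathcal Z,\pi)$ if there exists $g_X\in\mathcal G_X(\rho)$ such that $\mathcal Z\ni Y\mapsto\rho(g_X(Y))$ is $\pi$-continuous at $Y=X$. *)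

From HB Require Import structures.
From mathcomp Require Import all_boot all_order all_algebra.
From mathcomp Require Import all_classical all_reals all_analysis.
Set Implicit Arguments. Unset Strict Implicit. Unset Printing Implicit Defensive.
Import Order.TTheory GRing.Theory Num.Theory.
Import numFieldNormedType.Exports.
Local Open Scope classical_set_scope.
Local Open Scope ring_scope.

Definition borelRn (R : realType) (n : nat) : set (set 'rV[R]_n) :=
  <<s [set A | open A] >>.

Definition Gn (R : realType) (n : nat) : set ('rV[R]_n -> R) :=
  [set g | forall B : set R, measurable B -> borelRn (g @^-1` B)].

Definition random_vector d (Omega : measurableType d) (R : realType) (n : nat)
  : set (Omega -> 'rV[R]_n) :=
  [set Z | forall A, borelRn A -> measurable (Z @^-1` A)].

Definition atomless d (Omega : measurableType d) (R : realType)
  (P : probability Omega R) : Prop :=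
  forall A : set Omega, measurable A -> (0 < P A)%E ->
    exists B : set Omega, [/\ measurable B, B `<=` A, (0 < P B)%E & (P B < P A)%E].

Definition is_pseudometric (T : Type) (R : realType) (Zs : set T)
  (pi : T -> T -> R) : Prop :=
  [/\ (forall Y Z, Zs Y -> Zs Z -> 0 <= pi Y Z),
      (forall Z, Zs Z -> pi Z Z = 0),
      (forall Y Z, Zs Y -> Zs Z -> pi Y Z = pi Z Y) &
      (forall X Y Z, Zs X -> Zs Y -> Zs Z -> pi X Z <= pi X Y + pi Y Z)].

Definition uncertainty_triplet d (Omega : measurableType d) (R : realType)
  (n : nat) (P : probability Omega R)
  (G : set ('rV[R]_n -> R)) (Zs : set (Omega -> 'rV[R]_n))
  (pi : (Omega -> 'rV[R]_n) -> (Omega -> 'rV[R]_n) -> R) : Prop :=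
  [/\ atomless P, G `<=` @Gn R n, Zs `<=` @random_vector d Omega R n
    & is_pseudometric Zs pi].

Definition compatible d (Omega : measurableType d) (R : realType) (n : nat)
  (G : set ('rV[R]_n -> R)) (Zs : set (Omega -> 'rV[R]_n))
  (pi : (Omega -> 'rV[R]_n) -> (Omega -> 'rV[R]_n) -> R)
  (rho : (Omega -> R) -> \bar R) : Prop :=
  (forall g Z, G g -> Zs Z -> rho (g \o Z) != -oo%E) /\
  (forall g Y Z, G g -> Zs Y -> Zs Z -> pi Y Z = 0 -> rho (g \o Y) = rho (g \o Z)).

Definition GX d (Omega : measurableType d) (R : realType) (n : nat)
  (G : set ('rV[R]_n -> R)) (rho : (Omega -> R) -> \bar R)
  (X : Omega -> 'rV[R]_n) : set ('rV[R]_n -> R) :=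
  [set g | G g /\ rho (g \o X) = ereal_inf [set rho (h \o X) | h in G]].

Definition pi_continuous_at (T : Type) (R : realType) (Zs : set T)
  (pi : T -> T -> R) (F : T -> \bar R) (X : T) : Prop :=
  forall U : set (\bar R), nbhs (F X) U ->
    exists2 delta : R, 0 < delta &
      forall Y, Zs Y -> pi Y X < delta -> U (F Y).

(* rho is pi_g-continuous on g(Zs), where pi_g(g(Y), g(Z)) := pi(Y, Z).
   Elements of g(Zs) are written g \o Z with Z in Zs (unique when g is a
   bijection), so this is continuity of rho at every point g(Z0) of g(Zs)
   with respect to pi_g. *)
Definition pig_continuous_on d (Omega : measurableType d) (R : realType)
  (n : nat) (Zs : set (Omega -> 'rV[R]_n))
  (pi : (Omega -> 'rV[R]_n) -> (Omega -> 'rV[R]_n) -> R)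
  (g : 'rV[R]_n -> R) (rho : (Omega -> R) -> \bar R) : Prop :=
  forall Z0, Zs Z0 ->
  forall U : set (\bar R), nbhs (rho (g \o Z0)) U ->
    exists2 delta : R, 0 < delta &
      forall Y, Zs Y -> pi Y Z0 < delta -> U (rho (g \o Y)).

Definition robust_at d (Omega : measurableType d) (R : realType) (n : nat)
  (G : set ('rV[R]_n -> R)) (Zs : set (Omega -> 'rV[R]_n))
  (pi : (Omega -> 'rV[R]_n) -> (Omega -> 'rV[R]_n) -> R)
  (rho : (Omega -> R) -> \bar R) (X : Omega -> 'rV[R]_n) : Prop :=
  exists2 gX, GX G rho X gX & pi_continuous_at Zs pi (fun Y => rho (gX \o Y)) X.

From HB Require Import structures.
From mathcomp Require Import all_boot all_order all_algebra.
From mathcomp Require Import all_classical all_reals all_analysis.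
Local Open Scope classical_set_scope.
Local Open Scope ring_scope.

Lemma pig_continuous_on_at d (Omega : measurableType d) (R : realType) (n : nat)
  (Zs : set (Omega -> 'rV[R]_n))
  (pi : (Omega -> 'rV[R]_n) -> (Omega -> 'rV[R]_n) -> R)
  (g : 'rV[R]_n -> R) (rho : (Omega -> R) -> \bar R) (X : Omega -> 'rV[R]_n) :
  pig_continuous_on Zs pi g rho -> Zs X ->
  pi_continuous_at Zs pi (fun Y => rho (g \o Y)) X.
Proof. by move=> rho_cont ZsX U; exact: rho_cont. Qed.

Theorem proposition1 (d : measure_display) (Omega : measurableType d)
  (R : realType) (n : nat) (P : probability Omega R)
  (G : set ('rV[R]_n -> R)) (Zs : set (Omega -> 'rV[R]_n))
  (pi : (Omega -> 'rV[R]_n) -> (Omega -> 'rV[R]_n) -> R)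
  (rho : (Omega -> R) -> \bar R) (X : Omega -> 'rV[R]_n) (g : 'rV[R]_n -> R) :
  uncertainty_triplet P G Zs pi -> Zs X -> compatible G Zs pi rho ->
  GX G rho X g -> bijective g -> pig_continuous_on Zs pi g rho ->
  robust_at G Zs pi rho X.
Proof.
(* Bijectivity of g only makes pi_g well defined; pig_continuous_on is already
   phrased through pi. *)
move=> _ ZsX _ gX_min _ rho_cont.
by exists g => //; exact: pig_continuous_on_at.
Qed.
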